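(* A monad $(T,\eta,\mu)$ on $\mathsf{Set}$ is strictly positive if and only if for every $T$-algebra $(A,e)$ and every $a\in A$, the only element $\tau\in TTA$ with $\mu_A(\tau)=\eta_A(a)$ is $\tau=\eta_{TA}(\eta_A(a))$ (i.e. the only partial evaluation witness out of the trivial formal expression $\eta_A(a)$ is $\eta_{TA}\eta_A(a)$).
   Context: A monad $(T,\eta,\mu)$ on $\mathsf{Set}$ is strictly positive if for every set $X$ the square with top map $\eta_{TX}\circ\eta_X:X\to TTX$, left map $\mathrm{id}_X$, right map $\mu_X:TTX\to TX$ and bottom map $\eta_X:X\to TX$ is a pullback; equivalently, for all $x\in X$ and $\tau\in TTX$, $\mu_X(\tau)=\eta_X(x)$ implies $\tau=\eta_{TX}\eta_X(x)$. A partial evaluation witness from $t_0\in TA$ is an element $\tau\in TTA$ with $\mu_A(\tau)=t_0$ (it witnesses that $t_0$ partially evaluates to $(Te)(\tau)$). *)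

(* Monads on Set, modelled with Rocq's Type as the category of sets:
   morphisms are functions, and equality of morphisms is pointwise equality. *)

Record SetMonad : Type := {
  T : Type -> Type;
  Tmap : forall (X Y : Type), (X -> Y) -> T X -> T Y;
  eta : forall X : Type, X -> T X;
  mu : forall X : Type, T (T X) -> T X;
  Tmap_id : forall X (t : T X), Tmap X X (fun x => x) t = t;
  Tmap_comp : forall X Y Z (f : X -> Y) (g : Y -> Z) (t : T X),
      Tmap X Z (fun x => g (f x)) t = Tmap Y Z g (Tmap X Y f t);
  eta_nat : forall X Y (f : X -> Y) (x : X), Tmap X Y f (eta X x) = eta Y (f x);
  mu_nat : forall X Y (f : X -> Y) (tt : T (T X)),
      Tmap X Y f (mu X tt) = mu Y (Tmap (T X) (T Y) (Tmap X Y f) tt);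
  mu_eta_l : forall X (t : T X), mu X (eta (T X) t) = t;
  mu_eta_r : forall X (t : T X), mu X (Tmap X (T X) (eta X) t) = t;
  mu_assoc : forall X (ttt : T (T (T X))),
      mu X (mu (T X) ttt) = mu X (Tmap (T (T X)) (T X) (mu X) ttt)
}.


Arguments Tmap s {X Y} _ _.
Arguments eta s {X} _.
Arguments mu s {X} _.

Definition is_pullback {P B C D : Type}
  (f : P -> B) (g : P -> C) (h : B -> D) (k : C -> D) : Prop :=
  (forall p, h (f p) = k (g p)) /\
  (forall b c, h b = k c -> exists p, f p = b /\ g p = c /\
                               forall p', f p' = b -> g p' = c -> p' = p).

Definition strictly_positive (M : SetMonad) : Prop :=
  forall X : Type,
    is_pullback (P := X) (B := T M (T M X)) (C := X) (D := T M X)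
      (fun x => eta M (eta M x)) (fun x => x) (fun tt => mu M tt) (fun x => eta M x).

Definition is_algebra (M : SetMonad) (A : Type) (e : T M A -> A) : Prop :=
  (forall a : A, e (eta M a) = a) /\
  (forall tt : T M (T M A), e (mu M tt) = e (Tmap M e tt)).

(* Strict positivity amounts to: for every set X, the only tau in TTX with
   mu tau = eta x is eta (eta x); so the condition on algebras is a special
   case.  Conversely, given such a tau over X, its image T(T eta) tau is a
   witness of the same kind out of eta (eta x) in the free algebra (TX, mu);
   it is therefore eta (eta (eta x)), and applying T mu, which splits
   T(T eta), gives back tau = eta (eta x). *)

From Stdlib Require Import FunctionalExtensionality Setoid.

Section SetMonadFacts.

Variable M : SetMonad.

Lemma Tmap_ext (X Y : Type) (f g : X -> Y) (t : T M X) :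
  (forall x, f x = g x) -> Tmap M f t = Tmap M g t.
Proof.
  intros Efg. replace g with f; [reflexivity|].
  apply functional_extensionality. exact Efg.
Qed.

Lemma free_algebra (X : Type) : is_algebra M (T M X) (@mu M X).
Proof.
  split.
  - apply mu_eta_l.
  - apply mu_assoc.
Qed.

Lemma Tmap_mu_Tmap_Teta (X : Type) (tau : T M (T M X)) :
  Tmap M (@mu M X) (Tmap M (Tmap M (@eta M X)) tau) = tau.
Proof.
  rewrite <- Tmap_comp.
  rewrite (Tmap_ext _ _ _ (fun t => t) tau) by apply mu_eta_r.
  apply Tmap_id.
Qed.

Lemma mu_Tmap_Teta_eq_eta (X : Type) (x : X) (tau : T M (T M X)) :
  mu M tau = eta M x ->
  mu M (Tmap M (Tmap M (@eta M X)) tau) = eta M (eta M x).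
Proof.
  intros Etau. rewrite <- mu_nat, Etau. apply eta_nat.
Qed.

Lemma strictly_positiveP :
  strictly_positive M <->
  (forall (X : Type) (x : X) (tau : T M (T M X)),
     mu M tau = eta M x -> tau = eta M (eta M x)).
Proof.
  split.
  - intros SP X x tau Etau.
    destruct (SP X) as [_ SPX].
    destruct (SPX tau x Etau) as [p [Ep [-> _]]].
    symmetry. exact Ep.
  - intros Hwit X. split.
    + intros x. apply mu_eta_l.
    + intros tau x Etau.
      exists x. split; [symmetry; exact (Hwit X x tau Etau)|].
      split; [reflexivity|].
      intros p _ Ep. exact Ep.
Qed.

End SetMonadFacts.

Theorem proposition3p13 (M : SetMonad) :
  strictly_positive M <->
  (forall (A : Type) (e : T M A -> A), is_algebra M A e ->
     forall (a : A) (tau : T M (T M A)),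
       mu M tau = eta M a -> tau = eta M (eta M a)).
Proof.
  rewrite strictly_positiveP. split.
  - intros Hwit A e _. apply Hwit.
  - intros Halg X x tau Etau.
    pose proof (Halg _ _ (free_algebra M X) (eta M x) _
                  (mu_Tmap_Teta_eq_eta M X x tau Etau)) as Efree.
    rewrite <- (Tmap_mu_Tmap_Teta M X tau), Efree, eta_nat.
    rewrite mu_eta_l. reflexivity.
Qed.
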